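(* Let $G$ be a Hausdorff topological group and $d\in\mathbb N$. Then $|M(G)|\le d$ if and only if every nonempty $G$-flow has an orbit of size at most $d$.
   Context: A $G$-flow is a continuous action of $G$ on a compact Hausdorff space. It is minimal if every orbit is dense. $M(G)$ denotes the universal minimal $G$-flow, i.e. the (unique up to isomorphism) minimal $G$-flow that admits a continuous $G$-equivariant map onto every minimal $G$-flow. *)

From Stdlib Require Import List.
Import ListNotations.

Record Topology (X : Type) := {
  is_open : (X -> Prop) -> Prop;
  open_full : is_open (fun _ => True);
  open_inter : forall U V, is_open U -> is_open V ->
                 is_open (fun x => U x /\ V x);
  open_union : forall (I : Type) (F : I -> X -> Prop),
                 (forall i, is_open (F i)) -> is_open (fun x => exists i, F i x)
}.
Arguments is_open {X} t U.

Definition continuous {X Y : Type} (tX : Topology X) (tY : Topology Y)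
  (f : X -> Y) : Prop :=
  forall V, is_open tY V -> is_open tX (fun x => V (f x)).

(* Joint continuity of f : X x Y -> Z (w.r.t. the product topology),
   written out pointwise with basic open rectangles. *)
Definition continuous2 {X Y Z : Type} (tX : Topology X) (tY : Topology Y)
  (tZ : Topology Z) (f : X -> Y -> Z) : Prop :=
  forall x y W, is_open tZ W -> W (f x y) ->
    exists U V, is_open tX U /\ is_open tY V /\ U x /\ V y /\
      forall a b, U a -> V b -> W (f a b).

Definition hausdorff {X : Type} (t : Topology X) : Prop :=
  forall x y, x <> y -> exists U V, is_open t U /\ is_open t V /\ U x /\ V y /\
    forall z, ~ (U z /\ V z).

Definition compact {X : Type} (t : Topology X) : Prop :=
  forall (I : Type) (F : I -> X -> Prop),
    (forall i, is_open t (F i)) -> (forall x, exists i, F i x) ->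
    exists l : list I, forall x, exists i, In i l /\ F i x.

Record TopGroup := {
  gcar :> Type;
  gmul : gcar -> gcar -> gcar;
  ginv : gcar -> gcar;
  gone : gcar;
  gmulA : forall a b c, gmul a (gmul b c) = gmul (gmul a b) c;
  gmul1l : forall a, gmul gone a = a;
  gmulVl : forall a, gmul (ginv a) a = gone;
  gtop : Topology gcar;
  gmul_cont : continuous2 gtop gtop gtop gmul;
  ginv_cont : continuous gtop gtop ginv
}.

Record Flow (G : TopGroup) := {
  fcar :> Type;
  ftop : Topology fcar;
  fcompact : compact ftop;
  fhausdorff : hausdorff ftop;
  act : G -> fcar -> fcar;
  act1 : forall x, act (gone G) x = x;
  actM : forall g h x, act (gmul G g h) x = act g (act h x);
  act_cont : continuous2 (gtop G) ftop ftop act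
}.
Arguments ftop {G} f.
Arguments act {G} f _ _.

Definition orbit {G : TopGroup} (X : Flow G) (x : X) : X -> Prop :=
  fun y => exists g : G, act X g x = y.

Definition dense {X : Type} (t : Topology X) (A : X -> Prop) : Prop :=
  forall U, is_open t U -> (exists x, U x) -> exists x, U x /\ A x.

Definition minimal_flow {G : TopGroup} (X : Flow G) : Prop :=
  (exists x : X, True) /\ forall x : X, dense (ftop X) (orbit X x).

Definition equivariant {G : TopGroup} (X Y : Flow G) (f : X -> Y) : Prop :=
  forall (g : G) (x : X), f (act X g x) = act Y g (f x).

Definition surjective {A B : Type} (f : A -> B) : Prop :=
  forall b, exists a, f a = b.

Definition universal_minimal_flow {G : TopGroup} (M : Flow G) : Prop :=
  minimal_flow M /\
  forall Y : Flow G, minimal_flow Y ->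
    exists f : M -> Y, continuous (ftop M) (ftop Y) f /\ equivariant M Y f /\
                       surjective f.

Definition card_le {X : Type} (A : X -> Prop) (d : nat) : Prop :=
  exists l : list X, length l <= d /\ forall x, A x -> In x l.

(* Backward direction: M(G) is minimal, so every orbit of it is dense; a dense
   set contained in a finite list is everything (finite sets are closed in a
   Hausdorff space), hence M(G) itself has at most d points.

   Forward direction: every nonempty flow X contains a minimal subflow Y
   (Zorn's lemma on proper open invariant sets, using compactness), and M(G)
   maps onto Y, so the orbit in X of any point of Y has at most |M(G)| points.
   This needs the existence of M(G), which is the bulk of the file: every
   minimal flow is coded, through the sets of group elements approaching its
   points, by a structure on the set (G -> Prop) -> Prop; the product of all
   realizable such structures is compact by Tychonoff's theorem (proved with
   ultrafilters), and a minimal subflow of this product maps onto every minimal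
   flow, since morphisms into minimal flows are onto. *)

From Stdlib Require Import List Classical ClassicalEpsilon FunctionalExtensionality
  PropExtensionality ProofIrrelevance.
From mathcomp Require classical_sets.
Import ListNotations.

Section OpenSets.
Variables (X : Type) (t : Topology X).

Lemma open_ext (A B : X -> Prop) :
  is_open t A -> (forall x, A x <-> B x) -> is_open t B.
Proof.
  intros HA E.
  replace B with A; auto.
  apply functional_extensionality; intro x; apply propositional_extensionality; auto.
Qed.

Lemma open_family_union (Q : (X -> Prop) -> Prop) :
  (forall V, Q V -> is_open t V) -> is_open t (fun x => exists V, Q V /\ V x).
Proof.
  intros H.
  apply open_ext with (A := fun x => exists i : {V | Q V}, proj1_sig i x).
  - apply open_union. intros [V HV]; simpl; auto.
  - intro x; split.
    + intros [[V HV] h]; simpl in h; eauto.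
    + intros [V [HV h]]. exists (exist _ V HV); simpl; auto.
Qed.

Lemma open_or (A B : X -> Prop) :
  is_open t A -> is_open t B -> is_open t (fun x => A x \/ B x).
Proof.
  intros HA HB.
  apply open_ext with (A := fun x => exists V, (V = A \/ V = B) /\ V x).
  - apply open_family_union. intros V [-> | ->]; auto.
  - intro x; split.
    + intros [V [[-> | ->] h]]; auto.
    + intros [h|h]; eauto.
Qed.

Hypothesis Ht : hausdorff t.

Lemma open_neq (w : X) : is_open t (fun z => z <> w).
Proof.
  apply open_ext with (A := fun z => exists V, (is_open t V /\ ~ V w) /\ V z).
  - apply open_family_union. intros V [h _]; auto.
  - intro z; split.
    + intros [V [[_ h1] h2]] E; subst; auto.
    + intro ne. destruct (Ht z w ne) as [U [V [hU [hV [hz [hw hd]]]]]].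
      exists U; repeat split; auto. intro Uw. apply (hd w); auto.
Qed.

Lemma open_compl_finite (A : X -> Prop) (l : list X) :
  (forall x, A x -> In x l) -> is_open t (fun z => ~ A z).
Proof.
  intros Hl.
  assert (Havoid : forall l, is_open t (fun z => forall w, In w l -> A w -> z <> w)).
  { induction l0 as [|w l0 IH].
    - apply open_ext with (A := fun _ => True); [apply open_full|].
      intro z; split; [intros _ w0 [] | auto].
    - apply open_ext with
        (A := fun z => (A w -> z <> w) /\ forall w', In w' l0 -> A w' -> z <> w').
      + apply open_inter; auto. destruct (classic (A w)) as [q|q].
        * apply open_ext with (A := fun z => z <> w); [apply open_neq|]. tauto.
        * apply open_ext with (A := fun _ => True); [apply open_full|]. tauto.
      + intro z; split.
        * intros [h1 h2] w' [<-|hw']; auto.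
        * intros h; split; [apply h; simpl; auto | intros; apply h; simpl; auto]. }
  apply open_ext with (1 := Havoid l). intro z; split.
  - intros h Az. apply (h z); auto.
  - intros nA w _ Aw E. subst. auto.
Qed.

Lemma dense_finite_full (A : X -> Prop) (l : list X) :
  dense t A -> (forall x, A x -> In x l) -> forall x, A x.
Proof.
  intros Hd Hl x. apply NNPP; intro nx.
  destruct (Hd _ (open_compl_finite A l Hl) (ex_intro _ x nx)) as [y [ny Ay]].
  auto.
Qed.

End OpenSets.

Lemma zorn_sets (T : Type) (P : (T -> Prop) -> Prop) :
  (forall F : (T -> Prop) -> Prop, (forall X, F X -> P X) ->
     (forall X Y, F X -> F Y -> (forall t, X t -> Y t) \/ (forall t, Y t -> X t)) ->
     P (fun t => exists X, F X /\ X t)) ->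
  exists A, P A /\ forall B, (forall t, A t -> B t) -> P B -> forall t, B t -> A t.
Proof.
  intros H.
  destruct (@classical_sets.Zorn_bigcup T P) as [A [PA HA]].
  - intros F HF Htot.
    replace (classical_sets.bigcup F (fun X => X)) with (fun t => exists X, F X /\ X t).
    + apply H; auto.
    + apply functional_extensionality; intro t; apply propositional_extensionality.
      unfold classical_sets.bigcup, classical_sets.mkset; split.
      * intros [X [h1 h2]]; exists X; auto.
      * intros [X h1 h2]; eauto.
  - exists A; split; auto.
    intros B AB PB t Bt. apply NNPP; intro nA.
    apply (HA B); auto. split; [exact AB | intro BA; apply nA, BA, Bt].
Qed.

Lemma chain_max {T : Type} (F : (T -> Prop) -> Prop)
  (Htot : forall X Y, F X -> F Y -> (forall t, X t -> Y t) \/ (forall t, Y t -> X t)) :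
  forall l : list (T -> Prop), l <> [] -> (forall X, In X l -> F X) ->
  exists Y, F Y /\ forall X, In X l -> forall t, X t -> Y t.
Proof.
  induction l as [|a l IH]; intros ne HF; [congruence|].
  destruct l as [|b l'].
  - exists a. split; [apply HF; simpl; auto|]. intros X [<-|[]]; auto.
  - destruct IH as [Y [FY HY]]; [congruence | intros; apply HF; simpl; auto |].
    destruct (Htot a Y (HF a (or_introl eq_refl)) FY) as [h|h].
    + exists Y; split; auto. intros X [<-|hX]; eauto.
    + exists a; split; [apply HF; simpl; auto|]. intros X [<-|hX] t Xt; eauto.
Qed.

Lemma list_choice {A B : Type} (P : B -> Prop) (R : A -> B -> Prop) (l : list A) :
  (forall a, In a l -> exists b, P b /\ R a b) ->
  exists l' : list B, (forall b, In b l' -> P b) /\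
                      (forall a, In a l -> exists b, In b l' /\ R a b).
Proof.
  induction l as [|a l IH]; intros H.
  - exists []; split; [intros b [] | intros a []].
  - destruct IH as [l' [h1 h2]]; [intros; apply H; simpl; auto|].
    destruct (H a (or_introl eq_refl)) as [b [pb rb]].
    exists (b :: l'); split.
    + intros b' [<-|hb]; auto.
    + intros a' [<-|ha].
      * exists b; simpl; auto.
      * destruct (h2 a' ha) as [b' [hb' rb']]. exists b'; simpl; auto.
Qed.

Lemma card_le_image {A B : Type} (P : A -> Prop) (Q : B -> Prop) (h : A -> B) (d : nat) :
  card_le P d -> (forall y, Q y -> exists x, P x /\ h x = y) -> card_le Q d.
Proof.
  intros [l [hlen hl]] hQ. exists (map h l). split.
  - rewrite length_map; auto.
  - intros y Qy. destruct (hQ y Qy) as [x [Px <-]]. apply in_map; auto.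
Qed.

Lemma sig_eq {A : Type} {P : A -> Prop} (x y : sig P) : proj1_sig x = proj1_sig y -> x = y.
Proof. apply eq_sig_hprop. intros; apply proof_irrelevance. Qed.

Section Flows.
Context {G : TopGroup}.

Lemma act_inv (X : Flow G) (g : G) (x : X) : act X (ginv G g) (act X g x) = x.
Proof. rewrite <- actM, gmulVl, act1. reflexivity. Qed.

Lemma open_translate (X : Flow G) (g : G) (V : X -> Prop) :
  is_open (ftop X) V -> is_open (ftop X) (fun z => V (act X g z)).
Proof.
  intro HV.
  apply open_ext with (A := fun z => exists W,
    (is_open (ftop X) W /\ forall b, W b -> V (act X g b)) /\ W z).
  - apply open_family_union. intros W [h _]; auto.
  - intro z; split.
    + intros [W [[_ h] hz]]; auto.
    + intro hz. destruct (act_cont G X g z V HV hz) as [U [W [_ [hW [hg [hwz h]]]]]].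
      exists W; repeat split; auto.
Qed.

Definition invariant (X : Flow G) (U : X -> Prop) : Prop :=
  forall g x, U x -> U (act X g x).

Definition flow_morphism (X Y : Flow G) (f : X -> Y) : Prop :=
  continuous (ftop X) (ftop Y) f /\ equivariant X Y f.

Lemma flow_morphism_comp (X Y Z : Flow G) (f : X -> Y) (h : Y -> Z) :
  flow_morphism X Y f -> flow_morphism Y Z h -> flow_morphism X Z (fun x => h (f x)).
Proof.
  intros [cf ef] [ch eh]. split.
  - intros W hW. apply (cf (fun y => W (h y))), ch, hW.
  - intros g x. rewrite ef, eh. reflexivity.
Qed.

(* The complement of the closure of an orbit: the points having a neighbourhood
   that the orbit of x avoids.  It is an open invariant set missing x. *)
Definition outside_orbit_closure (X : Flow G) (x : X) : X -> Prop :=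
  fun z => exists V, (is_open (ftop X) V /\ forall g, ~ V (act X g x)) /\ V z.

Lemma outside_orbit_closure_open (X : Flow G) (x : X) :
  is_open (ftop X) (outside_orbit_closure X x).
Proof. apply open_family_union. intros V [h _]; auto. Qed.

Lemma outside_orbit_closure_invariant (X : Flow G) (x : X) :
  invariant X (outside_orbit_closure X x).
Proof.
  intros g z [V [[hV hnV] hz]].
  exists (fun w => V (act X (ginv G g) w)). split; [split|].
  - apply open_translate; auto.
  - intros g' h. rewrite <- actM in h. apply (hnV _ h).
  - rewrite act_inv; auto.
Qed.

Lemma outside_orbit_closure_not_self (X : Flow G) (x : X) :
  ~ outside_orbit_closure X x x.
Proof. intros [V [[_ hnV] hV]]. apply (hnV (gone G)). rewrite act1; auto. Qed.

End Flows.

Section Subspace.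
Variables (X : Type) (t : Topology X) (K : X -> Prop).

Definition subspace_open (V : sig K -> Prop) : Prop :=
  exists U, is_open t U /\ forall s, V s <-> U (proj1_sig s).

Definition subspace : Topology (sig K).
Proof.
  refine {| is_open := subspace_open |}.
  - exists (fun _ => True); split; [apply open_full | tauto].
  - intros A B [UA [hA eA]] [UB [hB eB]]. exists (fun x => UA x /\ UB x); split.
    + apply open_inter; auto.
    + intro s; specialize (eA s); specialize (eB s); tauto.
  - intros I F HF.
    assert (HF' : forall i, {U | is_open t U /\ forall s, F i s <-> U (proj1_sig s)}).
    { intro i; apply constructive_indefinite_description; apply HF. }
    exists (fun x => exists i, proj1_sig (HF' i) x); split.
    + apply open_union. intro i; exact (proj1 (proj2_sig (HF' i))).
    + intro s; split; intros [i hi]; exists i; apply (proj2 (proj2_sig (HF' i))); auto.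
Defined.

Lemma subspace_restrict (U : X -> Prop) :
  is_open t U -> is_open subspace (fun s => U (proj1_sig s)).
Proof. intro hU. exists U; split; auto; tauto. Qed.

Lemma subspace_hausdorff : hausdorff t -> hausdorff subspace.
Proof.
  intros Ht x y ne.
  assert (ne' : proj1_sig x <> proj1_sig y) by (intro E; apply ne, sig_eq, E).
  destruct (Ht _ _ ne') as [A [B [hA [hB [ha [hb hd]]]]]].
  exists (fun s => A (proj1_sig s)), (fun s => B (proj1_sig s)).
  repeat split; try apply subspace_restrict; auto.
Qed.

End Subspace.

Lemma closed_subspace_compact {X : Type} (t : Topology X) (U : X -> Prop) :
  compact t -> is_open t U -> compact (subspace X t (fun x => ~ U x)).
Proof.
  intros Hc HU I F HF Hcov.
  assert (HF' : forall i, {V | is_open t V /\ forall s, F i s <-> V (proj1_sig s)}).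
  { intro i; apply constructive_indefinite_description; apply HF. }
  destruct (Hc (option I)
      (fun o => match o with None => U | Some i => proj1_sig (HF' i) end)) as [l Hl].
  - intros [i|]; [exact (proj1 (proj2_sig (HF' i))) | exact HU].
  - intro x. destruct (classic (U x)) as [h|h]; [exists None; auto|].
    destruct (Hcov (exist _ x h)) as [i hi]. exists (Some i).
    apply (proj2 (proj2_sig (HF' i))) in hi; auto.
  - exists (flat_map (fun o => match o with None => [] | Some i => [i] end) l).
    intros [x kx]. destruct (Hl x) as [[i|] [hin hx]]; [|contradiction].
    exists i; split.
    + apply in_flat_map. exists (Some i); simpl; auto.
    + apply (proj2 (proj2_sig (HF' i))); auto.
Qed.

Section ClosedSubflow.
Context {G : TopGroup}.
Variables (X : Flow G) (U : X -> Prop).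
Hypotheses (HUo : is_open (ftop X) U) (HUi : invariant X U).

Definition complement : X -> Prop := fun x => ~ U x.

Lemma complement_invariant g x : complement x -> complement (act X g x).
Proof. intros h1 h2. apply h1. rewrite <- (act_inv X g x). apply HUi; auto. Qed.

Definition complement_act (g : G) (s : sig complement) : sig complement :=
  exist complement (act X g (proj1_sig s)) (complement_invariant g _ (proj2_sig s)).

Lemma complement_act1 s : complement_act (gone G) s = s.
Proof. apply sig_eq; simpl; apply act1. Qed.

Lemma complement_actM g h s : complement_act (gmul G g h) s = complement_act g (complement_act h s).
Proof. apply sig_eq; simpl; apply actM. Qed.

Lemma complement_act_cont :
  continuous2 (gtop G) (subspace X (ftop X) complement) (subspace X (ftop X) complement) complement_act.
Proof.
  intros g [x kx] W [UW [hUW eW]] hW.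
  apply eW in hW; simpl in hW.
  destruct (act_cont G X g x UW hUW hW) as [A [B [hA [hB [ha [hb h]]]]]].
  exists A, (fun s => B (proj1_sig s)). repeat split; auto.
  - apply subspace_restrict; auto.
  - intros a [b kb] h1 h2. apply eW; simpl. apply h; auto.
Qed.

Definition closed_subflow : Flow G :=
  {| fcar := sig complement; ftop := subspace X (ftop X) complement;
     fcompact := closed_subspace_compact (ftop X) U (fcompact G X) HUo;
     fhausdorff := subspace_hausdorff X (ftop X) complement (fhausdorff G X);
     act := complement_act; act1 := complement_act1; actM := complement_actM; act_cont := complement_act_cont |}.

Lemma closed_subflow_inclusion : flow_morphism closed_subflow X (@proj1_sig _ complement).
Proof. split; [intros V hV; apply subspace_restrict; auto | intros g s; reflexivity]. Qed.

End ClosedSubflow.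

Section MinimalSubflows.
Context {G : TopGroup}.

(* Open invariant sets missing at least one point; their complements are the
   nonempty closed subflows. *)
Definition proper_open_invariant (X : Flow G) (U : X -> Prop) : Prop :=
  is_open (ftop X) U /\ invariant X U /\ exists x, ~ U x.

(* By compactness a union of a chain of proper open invariant sets is proper,
   so Zorn's lemma yields a maximal one. *)
Lemma maximal_proper_open_invariant (X : Flow G) : (exists x : X, True) ->
  exists U, proper_open_invariant X U /\
    forall V, (forall x, U x -> V x) -> proper_open_invariant X V -> forall x, V x -> U x.
Proof.
  intros [x0 _]. apply zorn_sets.
  intros F HF Htot. split; [|split].
  - apply open_family_union. intros V FV; apply HF; auto.
  - intros g x [V [FV hV]]. exists V; split; auto. apply (HF V FV); auto.
  - apply NNPP; intro Hfull.
    assert (Hcov : forall x, exists i : {V | F V}, proj1_sig i x).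
    { intro x. apply NNPP; intro nx. apply Hfull. exists x. intros [V [FV hV]].
      apply nx. exists (exist _ V FV); auto. }
    destruct (fcompact G X {V | F V} (@proj1_sig _ _)) as [l Hl]; auto.
    { intros [V FV]; simpl; apply HF; auto. }
    destruct (chain_max F Htot (map (@proj1_sig _ _) l)) as [Y [FY HY]].
    + destruct (Hl x0) as [i [hi _]]. destruct l; [destruct hi | discriminate].
    + intros V hV. apply in_map_iff in hV. destruct hV as [[V' FV] [<- _]]; auto.
    + destruct (HF Y FY) as [_ [_ [y ny]]]. apply ny.
      destruct (Hl y) as [i [hi hy]]. apply (HY (proj1_sig i)); auto.
      apply in_map; auto.
Qed.

(* The complement of a maximal proper open invariant set is a minimal flow: if
   some orbit avoided a nonempty open set, adding the complement of its closure
   would enlarge the maximal set. *)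
Lemma closed_subflow_minimal (X : Flow G) (U : X -> Prop)
  (HU : proper_open_invariant X U)
  (Hmax : forall V, (forall x, U x -> V x) -> proper_open_invariant X V ->
          forall x, V x -> U x) :
  minimal_flow (closed_subflow X U (proj1 HU) (proj1 (proj2 HU))).
Proof.
  pose proof HU as [HUo [HUi [x nx]]]. split.
  - exists (exist _ x nx); auto.
  - intros s0 O [UO [hUO eO]] [k hk]. apply NNPP; intro Hn.
    set (V := fun z => U z \/ outside_orbit_closure X (proj1_sig s0) z).
    assert (HV : proper_open_invariant X V).
    { split; [|split].
      - apply open_or; auto. apply outside_orbit_closure_open.
      - intros g z [h|h]; [left; apply HUi; auto | right].
        apply outside_orbit_closure_invariant; auto.
      - exists (proj1_sig s0). intros [h|h].
        + exact (proj2_sig s0 h).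
        + exact (outside_orbit_closure_not_self X _ h). }
    apply (proj2_sig k), (Hmax V); [intros z hz; left; exact hz | exact HV |].
    right. exists UO; repeat split; auto.
    + intros g hg. apply Hn. exists (complement_act X U (proj1 (proj2 HU)) g s0). split.
      * apply eO. exact hg.
      * exists g; reflexivity.
    + apply eO, hk.
Qed.

Lemma minimal_subflow_exists (X : Flow G) : (exists x : X, True) ->
  exists (Y : Flow G) (i : Y -> X), minimal_flow Y /\ flow_morphism Y X i.
Proof.
  intros hX.
  destruct (maximal_proper_open_invariant X hX) as [U [HU Hmax]].
  exists (closed_subflow X U (proj1 HU) (proj1 (proj2 HU))), (@proj1_sig _ _).
  split; [apply closed_subflow_minimal; auto | apply closed_subflow_inclusion].
Qed.

End MinimalSubflows.

Lemma image_avoids_neighbourhood {X Y : Type} (tX : Topology X) (tY : Topology Y)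
  (f : X -> Y) (y : Y) :
  compact tX -> hausdorff tY -> continuous tX tY f -> (forall x, f x <> y) ->
  exists V, is_open tY V /\ V y /\ forall x, ~ V (f x).
Proof.
  intros Hc Ht Hf Hy.
  set (J := {W : Y -> Prop | is_open tY W /\
              exists V, is_open tY V /\ V y /\ forall z, ~ (W z /\ V z)}).
  destruct (Hc J (fun j x => proj1_sig j (f x))) as [l hl].
  - intros [W hW]; simpl. apply Hf, hW.
  - intro x. destruct (Ht _ _ (Hy x)) as [A [B [hA [hB [ha [hb hd]]]]]].
    exists (exist _ A (conj hA (ex_intro _ B (conj hB (conj hb hd))))); simpl; auto.
  - assert (Hsep : exists V, is_open tY V /\ V y /\
                     forall j, In j l -> forall z, ~ (proj1_sig j z /\ V z)).
    { clear hl. induction l as [|j l IH].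
      - exists (fun _ => True); repeat split; [apply open_full | intros j []].
      - destruct IH as [V [hV [vy hVd]]].
        destruct (proj2_sig j) as [_ [V' [hV' [vy' hd']]]].
        exists (fun z => V z /\ V' z). repeat split; auto.
        + apply open_inter; auto.
        + intros j' [<-|hj] z [h1 [h2 h3]]; [apply (hd' z) | apply (hVd j' hj z)]; auto. }
    destruct Hsep as [V [hV [vy hVd]]].
    exists V; repeat split; auto. intros x vx.
    destruct (hl x) as [j [hj hjx]]. apply (hVd j hj (f x)); auto.
Qed.

(* A morphism from a nonempty flow to a minimal flow is onto: its image is
   closed and contains a dense orbit. *)
Lemma morphism_onto_minimal {G : TopGroup} (M Y : Flow G) (f : M -> Y) :
  flow_morphism M Y f -> (exists m : M, True) -> minimal_flow Y -> surjective f.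
Proof.
  intros [hc he] [m0 _] [_ hmin] y. apply NNPP; intro Hn.
  destruct (image_avoids_neighbourhood (ftop M) (ftop Y) f y
              (fcompact G M) (fhausdorff G Y) hc) as [V [hV [vy hVd]]].
  { intros x E. apply Hn; eauto. }
  destruct (hmin (f m0) V hV (ex_intro _ y vy)) as [z [vz [g <-]]].
  rewrite <- he in vz. exact (hVd _ vz).
Qed.

Section Ultrafilters.
Variable T : Type.

Definition fip (Fam : (T -> Prop) -> Prop) : Prop :=
  forall l, (forall X, In X l -> Fam X) -> exists x, forall X, In X l -> X x.

Definition ultra (Fam : (T -> Prop) -> Prop) : Prop :=
  forall B, Fam B \/ Fam (fun x => ~ B x).

Lemma split_list (Q : (T -> Prop) -> Prop) (B : T -> Prop) :
  forall l, (forall X, In X l -> Q X \/ X = B) ->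
  exists l1, (forall X, In X l1 -> Q X) /\
    forall x, (forall X, In X l1 -> X x) -> B x -> forall X, In X l -> X x.
Proof.
  induction l as [|a l IH]; intros H.
  - exists []. split; [intros X [] | intros x _ _ X []].
  - destruct IH as [l1 [h1 h2]]; [intros; apply H; simpl; auto|].
    destruct (H a (or_introl eq_refl)) as [qa|ea].
    + exists (a :: l1). split.
      * intros X [<-|hX]; auto.
      * intros x hx bx X [<-|hX]; [apply hx; simpl; auto|].
        apply h2; auto. intros; apply hx; simpl; auto.
    + exists l1. split; auto. intros x hx bx X [<-|hX]; [subst; auto | apply h2; auto].
Qed.

Lemma fip_add_or_compl (Fam : (T -> Prop) -> Prop) (B : T -> Prop) :
  fip Fam -> fip (fun X => Fam X \/ X = B) \/
             fip (fun X => Fam X \/ X = (fun x => ~ B x)).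
Proof.
  intros H. apply NNPP; intro Hn.
  apply not_or_and in Hn; destruct Hn as [n1 n2].
  apply not_all_ex_not in n1; destruct n1 as [l1 n1].
  apply not_all_ex_not in n2; destruct n2 as [l2 n2].
  apply imply_to_and in n1; destruct n1 as [i1 n1].
  apply imply_to_and in n2; destruct n2 as [i2 n2].
  destruct (split_list Fam B l1 i1) as [k1 [hk1 e1]].
  destruct (split_list Fam _ l2 i2) as [k2 [hk2 e2]].
  destruct (H (k1 ++ k2)) as [x hx].
  { intros X hX; apply in_app_or in hX; destruct hX; auto. }
  destruct (classic (B x)) as [bx|bx].
  - apply n1. exists x. apply e1; auto. intros; apply hx; apply in_or_app; auto.
  - apply n2. exists x. apply e2; auto. intros; apply hx; apply in_or_app; auto.
Qed.

Lemma ultrafilter_lemma (Fam : (T -> Prop) -> Prop) : fip Fam ->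
  exists A, (forall X, Fam X -> A X) /\ fip A /\ ultra A.
Proof.
  intros H0.
  destruct (zorn_sets _ (fun A => fip (fun X => Fam X \/ A X))) as [A [PA maxA]].
  - intros F HF Htot l hl.
    destruct (classic (exists Y, F Y)) as [[Y0 FY0]|nF].
    + destruct (list_choice F (fun X Y => Fam X \/ Y X) l) as [l' [hF hl']].
      { intros X hX. destruct (hl X hX) as [h|[Y [FY hY]]]; [exists Y0 | exists Y]; auto. }
      destruct l as [|X l]; [apply H0; intros X []|].
      destruct (chain_max F Htot l') as [Y [FY hY]]; auto.
      { destruct (hl' X (or_introl eq_refl)) as [Y [hY _]]. destruct l'; [destruct hY|discriminate]. }
      apply (HF Y FY). intros X' hX'. destruct (hl' X' hX') as [Y' [hY' [h|h]]]; eauto.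
    + apply H0. intros X hX. destruct (hl X hX) as [h|h]; auto. exfalso; firstorder.
  - exists (fun X => Fam X \/ A X). repeat split; auto.
    + intro B. destruct (fip_add_or_compl _ B PA) as [h|h].
      * left; right. apply (maxA (fun X => A X \/ X = B)); auto.
        intros l hl. apply h. intros X hX. destruct (hl X hX) as [?|[?|?]]; auto.
      * right; right. apply (maxA (fun X => A X \/ X = (fun x => ~ B x))); auto.
        intros l hl. apply h. intros X hX. destruct (hl X hX) as [?|[?|?]]; auto.
Qed.

End Ultrafilters.
Arguments fip {T}.
Arguments ultra {T}.

Lemma fip_ultra_image {T S : Type} (p : T -> S) (A : (T -> Prop) -> Prop) :
  fip A -> ultra A -> fip (fun B => A (fun x => B (p x))) /\ ultra (fun B => A (fun x => B (p x))).
Proof.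
  intros hf hu. split.
  - intros l hl. destruct (hf (map (fun B x => B (p x)) l)) as [x hx].
    + intros X hX. apply in_map_iff in hX. destruct hX as [B [<- hB]]; auto.
    + exists (p x). intros B hB. apply (hx (fun x => B (p x))).
      apply (in_map (fun B x => B (p x))), hB.
  - intro B. apply hu.
Qed.

Lemma compact_ultra_limit {X : Type} (t : Topology X) (A : (X -> Prop) -> Prop) :
  compact t -> fip A -> ultra A -> exists x, forall B, is_open t B -> B x -> A B.
Proof.
  intros Hc hf hu. apply NNPP; intro Hn.
  set (J := {B | is_open t B /\ ~ A B}).
  destruct (Hc J (@proj1_sig _ _)) as [l hl].
  - intros [B hB]; apply hB.
  - intro x. apply NNPP; intro H1. apply Hn. exists x. intros B hB bx.
    apply NNPP; intro nA. apply H1. exists (exist _ B (conj hB nA)); auto.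
  - destruct (hf (map (fun j x => ~ proj1_sig j x) l)) as [y hy].
    + intros C hC. apply in_map_iff in hC. destruct hC as [[B [hB nA]] [<- _]].
      simpl. destruct (hu B); [contradiction | auto].
    + destruct (hl y) as [j [hj yj]].
      apply (hy (fun x => ~ proj1_sig j x)); auto.
      apply (in_map (fun j x => ~ proj1_sig j x)), hj.
Qed.

Section ProductFlow.
Context {G : TopGroup}.
Variables (I : Type) (Z : I -> Flow G).

Definition prod_car : Type := forall i, Z i.

Definition cylinder_data : Type := list {i : I & Z i -> Prop}.

Definition cylinder (L : cylinder_data) (f : prod_car) : Prop :=
  forall p, In p L -> projT2 p (f (projT1 p)).

Definition open_data (L : cylinder_data) : Prop :=
  forall p, In p L -> is_open (ftop (Z (projT1 p))) (projT2 p).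

Definition prod_open (W : prod_car -> Prop) : Prop :=
  forall f, W f -> exists L, open_data L /\ cylinder L f /\ forall h, cylinder L h -> W h.

Definition prod_topology : Topology prod_car.
Proof.
  refine {| is_open := prod_open |}.
  - intros f _. exists []. repeat split; intros p [].
  - intros A B hA hB f [fa fb].
    destruct (hA f fa) as [L1 [o1 [b1 h1]]]. destruct (hB f fb) as [L2 [o2 [b2 h2]]].
    exists (L1 ++ L2). repeat split.
    + intros p hp; apply in_app_or in hp; destruct hp; [apply o1 | apply o2]; auto.
    + intros p hp; apply in_app_or in hp; destruct hp; [apply b1 | apply b2]; auto.
    + apply h1; intros p hp; apply H, in_or_app; auto.
    + apply h2; intros p hp; apply H, in_or_app; auto.
  - intros J F HF f [j hj].
    destruct (HF j f hj) as [L [o [b h]]]. exists L; repeat split; auto.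
    intros k hk; exists j; auto.
Defined.

Lemma cylinder_open (L : cylinder_data) : open_data L -> prod_open (cylinder L).
Proof. intros o f b. exists L; repeat split; auto. Qed.

Lemma coordinate_open (i : I) (B : Z i -> Prop) :
  is_open (ftop (Z i)) B -> prod_open (fun f => B (f i)).
Proof.
  intros hB. apply open_ext with (t := prod_topology) (A := cylinder [existT _ i B]).
  - apply cylinder_open. intros p [<-|[]]; auto.
  - intro f; split; [intro h; apply (h (existT _ i B)); simpl; auto | intros h p [<-|[]]; auto].
Qed.

Lemma prod_hausdorff : hausdorff prod_topology.
Proof.
  intros f h ne.
  assert (exists i, f i <> h i) as [i hi].
  { apply NNPP; intro H. apply ne, functional_extensionality_dep.
    intro i. apply NNPP; intro H'. apply H; eauto. }
  destruct (fhausdorff G (Z i) _ _ hi) as [A [B [hA [hB [ha [hb hd]]]]]].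
  exists (fun z => A (z i)), (fun z => B (z i)).
  repeat split; try apply coordinate_open; auto.
Qed.

Definition prod_act (g : G) (f : prod_car) : prod_car := fun i => act (Z i) g (f i).

Lemma prod_act1 f : prod_act (gone G) f = f.
Proof. apply functional_extensionality_dep; intro i; apply act1. Qed.

Lemma prod_actM g h f : prod_act (gmul G g h) f = prod_act g (prod_act h f).
Proof. apply functional_extensionality_dep; intro i; apply actM. Qed.

Lemma prod_act_cont_cylinder g f : forall L, open_data L -> cylinder L (prod_act g f) ->
  exists U L', is_open (gtop G) U /\ U g /\ open_data L' /\ cylinder L' f /\
    forall a h, U a -> cylinder L' h -> cylinder L (prod_act a h).
Proof.
  induction L as [|[i B] L IH]; intros o b.
  - exists (fun _ => True), []. repeat split; try apply open_full; try (intros p []).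
    intros a c _ _ p [].
  - destruct IH as [U [L' [hU [hg [o' [b' h]]]]]].
    + intros p hp; apply o; simpl; auto.
    + intros p hp; apply b; simpl; auto.
    + assert (hB : is_open (ftop (Z i)) B) by (apply (o (existT _ i B)); simpl; auto).
      assert (hB' : B (act (Z i) g (f i))) by (apply (b (existT _ i B)); simpl; auto).
      destruct (act_cont G (Z i) g (f i) B hB hB') as [U1 [V1 [hU1 [hV1 [hg1 [hf1 h1]]]]]].
      exists (fun x => U1 x /\ U x), (existT _ i V1 :: L'). repeat split; auto.
      * apply open_inter; auto.
      * intros p [<-|hp]; simpl; auto.
      * intros p [<-|hp]; simpl; auto.
      * intros a c [ha1 ha] hc p [<-|hp].
        -- simpl. unfold prod_act. apply h1; auto. apply (hc (existT _ i V1)); simpl; auto.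
        -- apply h; auto. intros q hq; apply hc; simpl; auto.
Qed.

Lemma prod_act_cont : continuous2 (gtop G) prod_topology prod_topology prod_act.
Proof.
  intros g f W hW hWf.
  destruct (hW _ hWf) as [L [o [b h]]].
  destruct (prod_act_cont_cylinder g f L o b) as [U [L' [hU [hg [o' [b' h']]]]]].
  exists U, (cylinder L'). repeat split; auto.
  apply cylinder_open; auto.
Qed.

(* Tychonoff's theorem: a cover without finite subcover gives, through an ultra
   family extending the complements of its members, a point (the coordinatewise
   limit) that no member of the cover can contain. *)
Lemma prod_compact : compact prod_topology.
Proof.
  intros J C HC Hcov. apply NNPP; intro Hno.
  set (F0 := fun X : prod_car -> Prop => exists j, forall f, X f <-> ~ C j f).
  assert (fip0 : fip F0).
  { intros l hl.
    destruct (list_choice (fun _ => True) (fun X j => forall f, X f <-> ~ C j f) l)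
      as [l' [_ hl']].
    { intros X hX. destruct (hl X hX) as [j hj]; eauto. }
    destruct (classic (exists f, forall j, In j l' -> ~ C j f)) as [[f hf]|H].
    - exists f. intros X hX. destruct (hl' X hX) as [j [hj e]]. apply e, hf, hj.
    - exfalso. apply Hno. exists l'. intro f. apply NNPP; intro H'.
      apply H. exists f. intros j hj cj. apply H'; eauto. }
  destruct (ultrafilter_lemma _ F0 fip0) as [A [F0A [fipA ultraA]]].
  assert (coord : forall i, exists xi : Z i,
            forall B, is_open (ftop (Z i)) B -> B xi -> A (fun f => B (f i))).
  { intro i. destruct (fip_ultra_image (fun f : prod_car => f i) A fipA ultraA) as [h1 h2].
    exact (compact_ultra_limit (ftop (Z i)) _ (fcompact G (Z i)) h1 h2). }
  set (x := fun i => proj1_sig (constructive_indefinite_description _ (coord i))).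
  assert (hx : forall i B, is_open (ftop (Z i)) B -> B (x i) -> A (fun f => B (f i))).
  { intro i. exact (proj2_sig (constructive_indefinite_description _ (coord i))). }
  destruct (Hcov x) as [j hj].
  destruct (HC j x hj) as [L [o [b h]]].
  destruct (fipA ((fun f => ~ C j f) ::
                  map (fun (p : {i : I & Z i -> Prop}) f => projT2 p (f (projT1 p))) L))
    as [f hf].
  { intros X [<-|hX].
    - apply F0A. exists j; tauto.
    - apply in_map_iff in hX. destruct hX as [p [<- hp]]. apply hx; auto. }
  apply (hf (fun f => ~ C j f)); [left; reflexivity|].
  apply h. intros p hp. apply (hf (fun f : prod_car => projT2 p (f (projT1 p)))). right.
  apply in_map_iff; eauto.
Qed.

Definition prod_flow : Flow G :=
  {| fcar := prod_car; ftop := prod_topology; fcompact := prod_compact;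
     fhausdorff := prod_hausdorff; act := prod_act; act1 := prod_act1;
     actM := prod_actM; act_cont := prod_act_cont |}.

Lemma projection_morphism (i : I) : flow_morphism prod_flow (Z i) (fun f => f i).
Proof.
  split; [intros B hB; apply coordinate_open, hB | intros g f; reflexivity].
Qed.

End ProductFlow.

Section UniversalMinimalFlow.
Context {G : TopGroup}.

(* Codes for points: a point z of a flow in which y0 has a dense orbit is
   recorded by the sets A of group elements such that {a y0 | a in A} meets every
   neighbourhood of z; distinct points get distinct codes. *)
Definition code_space : Type := (G -> Prop) -> Prop.

Definition orbit_code (Y : Flow G) (y0 : Y) (z : Y) : code_space :=
  fun A => forall V, is_open (ftop Y) V -> V z -> exists g, A g /\ V (act Y g y0).

Lemma orbit_code_inj (Y : Flow G) (y0 : Y) :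
  dense (ftop Y) (orbit Y y0) -> forall y z, orbit_code Y y0 y = orbit_code Y y0 z -> y = z.
Proof.
  intros hd y z E. apply NNPP; intro ne.
  destruct (fhausdorff G Y y z ne) as [U [V [hU [hV [uy [vz hUV]]]]]].
  assert (h1 : orbit_code Y y0 y (fun g => U (act Y g y0))).
  { intros W hW wy. destruct (hd (fun x => W x /\ U x)) as [x [[wx ux] [g <-]]].
    - apply open_inter; auto.
    - exists y; auto.
    - exists g; auto. }
  rewrite E in h1. destruct (h1 V hV vz) as [g [h2 h3]].
  apply (hUV (act Y g y0)); auto.
Qed.

Definition realizable (op : (code_space -> Prop) -> Prop)
  (a : G -> code_space -> code_space) : Prop :=
  exists F : Flow G, (exists x : F, True) /\ exists e : F -> code_space,
    (forall V, op V <-> is_open (ftop F) (fun x => V (e x))) /\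
    (forall g x, e (act F g x) = a g (e x)).

(* Unlike the class of all flows, flow codes form a type living in the universe
   of G, so the flows they index can be multiplied into a single flow. *)
Definition flow_code : Type :=
  {op : (code_space -> Prop) -> Prop & {a : G -> code_space -> code_space | realizable op a}}.

Definition decode (c : flow_code) : Flow G :=
  proj1_sig (constructive_indefinite_description _ (proj2_sig (projT2 c))).

Lemma decode_spec (c : flow_code) :
  (exists x : decode c, True) /\ exists e : decode c -> code_space,
    (forall V, projT1 c V <-> is_open (ftop (decode c)) (fun x => V (e x))) /\
    (forall g x, e (act (decode c) g x) = proj1_sig (projT2 c) g (e x)).
Proof.
  exact (proj2_sig (constructive_indefinite_description _ (proj2_sig (projT2 c)))).
Qed.

(* Every minimal flow Y is the target of a morphism from a decoded flow: code Y
   through orbit_code and transport its topology and action. *)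
Lemma minimal_flow_decoded (Y : Flow G) : minimal_flow Y ->
  exists (c : flow_code) (h : decode c -> Y), flow_morphism (decode c) Y h.
Proof.
  intros [[y0 _] hd].
  set (eY := orbit_code Y y0).
  set (rY := fun c => epsilon (inhabits y0) (fun y => eY y = c)).
  assert (rY_eY : forall y, rY (eY y) = y).
  { intro y. apply (orbit_code_inj Y y0 (hd y0)).
    exact (epsilon_spec (inhabits y0) (fun z => eY z = eY y) (ex_intro _ y eq_refl)). }
  set (op := fun V : code_space -> Prop => is_open (ftop Y) (fun y => V (eY y))).
  set (a := fun g c => eY (act Y g (rY c))).
  assert (hreal : realizable op a).
  { exists Y. split; [exists y0; auto|]. exists eY. split; [reflexivity|].
    intros g x. unfold a. rewrite rY_eY. reflexivity. }
  set (c := existT _ op (exist _ a hreal) : flow_code).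
  destruct (decode_spec c) as [_ [eF [hop hact]]].
  exists c, (fun x => rY (eF x)). split.
  - intros V hV. apply (hop (fun z => V (rY z))).
    apply open_ext with (A := V); auto. intro y. rewrite rY_eY. tauto.
  - intros g x. simpl. rewrite hact. simpl. unfold a. rewrite rY_eY. reflexivity.
Qed.

Definition universal_product : Flow G := prod_flow flow_code decode.

Lemma universal_product_nonempty : exists x : universal_product, True.
Proof.
  assert (h : forall c, exists x : decode c, True) by (intro c; apply decode_spec).
  exists (fun c => proj1_sig (constructive_indefinite_description _ (h c))); auto.
Qed.

(* Existence of M(G): a minimal subflow of the universal product maps onto every
   minimal flow. *)
Theorem universal_minimal_flow_exists : exists M : Flow G, universal_minimal_flow M.
Proof.
  destruct (minimal_subflow_exists universal_product universal_product_nonempty)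
    as [M [i [hM hi]]].
  exists M. split; auto.
  intros Y hY.
  destruct (minimal_flow_decoded Y hY) as [c [h hh]].
  pose proof (flow_morphism_comp _ _ _ _ _
                (flow_morphism_comp _ _ _ _ _ hi (projection_morphism _ decode c)) hh)
    as hf.
  exists (fun m => h (i m c)). split; [apply hf | split; [apply hf|]].
  apply morphism_onto_minimal; auto. apply hM.
Qed.

End UniversalMinimalFlow.

Theorem mainTheorem5 (G : TopGroup) (HG : hausdorff (gtop G)) (d : nat) :
  (forall M : Flow G, universal_minimal_flow M ->
     card_le (fun _ : M => True) d)
  <->
  (forall X : Flow G, (exists x : X, True) ->
     exists x : X, card_le (orbit X x) d).
Proof.
  split.
  - (* A minimal subflow Y of X is a quotient of M(G), so each of its orbits,
       and hence the orbit of its image in X, has at most d points. *)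
    intros H X hX.
    destruct (minimal_subflow_exists X hX) as [Y [i [hY [_ hi]]]].
    destruct (universal_minimal_flow_exists (G := G)) as [M hM].
    pose proof (H M hM) as hcard.
    destruct hM as [_ hM]. destruct (hM Y hY) as [f [_ [hf fonto]]].
    destruct hY as [[y0 _] _].
    exists (i y0). apply (card_le_image _ _ (fun m => i (f m)) d hcard).
    intros x [g <-]. destruct (fonto (act Y g y0)) as [m hm].
    exists m. split; auto. rewrite hm. apply hi.
  - (* In the minimal flow M(G) a finite orbit is dense, hence everything. *)
    intros H M [[hne hd] _].
    destruct (H M hne) as [x [l [hlen hl]]].
    exists l. split; auto. intros y _. apply hl.
    apply (dense_finite_full _ (ftop M) (fhausdorff G M) _ l (hd x) hl).
Qed.
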